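(* Let $n>3$ be an integer. The inverse of the circulant matrix $\mathrm{circ}(3,1,0,\ldots,0,1)$ of order $n$ is \[[\mathrm{circ}(3,1,0,\ldots,0,1)]^{-1}=\mathrm{circ}(a_0,a_1,\ldots,a_{n-1}),\] where for $j=0,1,\ldots,n-1$, \[a_j=\frac{2^{n-j}}{\sqrt{5}}\left[\frac{(-3+\sqrt{5})^j}{2^n-(-3+\sqrt{5})^n}-\frac{(-3-\sqrt{5})^j}{2^n-(-3-\sqrt{5})^n}\right].\]
   Context: For $c_0,\dots,c_{k-1}$, $\mathrm{circ}(c_0,\ldots,c_{k-1})$ denotes the $k\times k$ circulant matrix whose $(i,j)$-entry is $c_{(j-i)\bmod k}$ (first row $c_0,\dots,c_{k-1}$, each subsequent row the cyclic right shift of the previous one). Thus $\mathrm{circ}(3,1,0,\ldots,0,1)$ has $3$ on the diagonal, $1$ on the two cyclically adjacent positions, and $0$ elsewhere. *)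

From mathcomp Require Import all_boot all_order all_algebra.
Set Implicit Arguments. Unset Strict Implicit. Unset Printing Implicit Defensive.
Import Order.TTheory GRing.Theory Num.Theory.
Local Open Scope ring_scope.

(* circ n c : the n x n circulant matrix whose (i,j) entry is c ((j - i) mod n),
   the first row being c 0, ..., c (n-1). *)
Definition circ (R : ringType) (n : nat) (c : nat -> R) : 'M[R]_n :=
  \matrix_(i < n, j < n) c ((n + j - i) %% n)%N.

Definition c311 (R : ringType) (n : nat) (k : nat) : R :=
  if k == 0%N then 3 else if (k == 1%N) || (k == n.-1) then 1 else 0.

Definition a_coef (R : rcfType) (n j : nat) : R :=
  let s := Num.sqrt (5 : R) in
  (2 ^+ (n - j) / s) *
  ((-3 + s) ^+ j / (2 ^+ n - (-3 + s) ^+ n)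
   - (-3 - s) ^+ j / (2 ^+ n - (-3 - s) ^+ n)).

From mathcomp Require Import all_boot all_order all_algebra.
From mathcomp Require Import zify ring lra.
Import Order.TTheory GRing.Theory Num.Theory.
Set Implicit Arguments. Unset Strict Implicit. Unset Printing Implicit Defensive.
Local Open Scope ring_scope.

(* Circulants multiply by cyclic convolution of their first rows, so
   circ(3,1,0,...,0,1) circ(a) = circ(3 a_d + a_(d-1) + a_(d+1)), indices mod n,
   and it suffices that this is the Kronecker delta at 0.  For a root x of
   x^2 + 3x + 1 the sequence g_j = x^j / (1 - x^n) solves the homogeneous
   recurrence, and g_(j+n) = g_j - x^j shows that, read cyclically, it fails
   only at d = 0 (defect x + 3) and at d = n - 1 (defect 1).  For the two roots
   r, w = (-3 +- sqrt 5)/2 the defects at n - 1 agree and those at 0 differ by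
   r - w = sqrt 5, so a = (g^r - g^w) / sqrt 5 works; this is the claimed a_j
   once the powers of 2 are cleared. *)

Lemma val_Zp_sub (m : nat) (i j : 'I_m.+1) :
  val (j - i) = ((m.+1 + j - i) %% m.+1)%N.
Proof. by rewrite /= modnDmr addnBA 1?addnC // ltnW. Qed.

Lemma circ_Zp (R : ringType) (m : nat) (c : nat -> R) (i j : 'I_m.+1) :
  circ m.+1 c i j = c (val (j - i)).
Proof. by rewrite mxE val_Zp_sub. Qed.

Lemma eq_circ (R : ringType) (n : nat) (c c' : nat -> R) :
  (forall d, (d < n)%N -> c d = c' d) -> circ n c = circ n c'.
Proof.
move=> ecc'; apply/matrixP => i j.
by rewrite !mxE ecc' // ltn_pmod // (leq_ltn_trans (leq0n i) (ltn_ord i)).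
Qed.

Lemma circ_delta (R : ringType) (n : nat) :
  circ n (fun d => (d == 0)%:R) = 1%:M :> 'M[R]_n.
Proof.
case: n => [|m]; first by apply/matrixP => -[].
apply/matrixP => i j; rewrite circ_Zp mxE.
by rewrite -[val _ == 0%N]/(j - i == 0) subr_eq0 eq_sym.
Qed.

Lemma mulmx_circ (R : ringType) (n : nat) (c a : nat -> R) :
  circ n c *m circ n a
  = circ n (fun d => \sum_(t < n) c t * a ((n + d - t) %% n)%N).
Proof.
case: n => [|m]; first by apply/matrixP => -[].
apply/matrixP => i k; rewrite mxE circ_Zp (reindex (fun t => i + t)).
  apply: eq_bigr => t _.
  by rewrite !circ_Zp -val_Zp_sub [i + t - i]addrC addKr opprD addrA.
by exists (fun j => j - i) => t _; rewrite addrC ?addKr ?subrK.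
Qed.

Lemma conv_c311 (R : ringType) (n d : nat) (a : nat -> R) :
  (2 < n)%N -> (d < n)%N ->
  \sum_(t < n) c311 R n t * a ((n + d - t) %% n)%N
    = 3 * a d + a ((d + n.-1) %% n)%N + a (d.+1 %% n)%N.
Proof.
case: n => [|[|[|m]]] // _ ltdn.
rewrite big_ord_recl big_ord_recl big_ord_recr big1 /= /bump /= ?add1n; last first.
  by move=> t _; rewrite /bump /c311 /= !add1n !eqSS ltn_eqF // mul0r.
rewrite /c311 /= eqxx subn0 modnDl modn_small //.
have -> : (m.+3 + d - 1 = d + m.+2)%N by lia.
have -> : (m.+3 + d - m.+2 = d.+1)%N by lia.
by rewrite add0r !mul1r addrA.
Qed.

Section PeriodicGeometric.
Variables (R : fieldType) (b x : R) (n : nat).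
Hypothesis x_root : x ^+ 2 + b * x + 1 = 0.
Hypothesis xn_neq1 : x ^+ n != 1.

Definition pgeom (j : nat) : R := x ^+ j / (1 - x ^+ n).

Lemma pgeom_shift j : pgeom (j + n) = pgeom j - x ^+ j.
Proof.
have D : 1 - x ^+ n != 0 by rewrite subr_eq0 eq_sym.
by rewrite /pgeom exprD; field.
Qed.

Lemma pgeom_rec j : b * pgeom j.+1 + pgeom j + pgeom j.+2 = 0.
Proof.
have -> : b * pgeom j.+1 + pgeom j + pgeom j.+2
          = x ^+ j * (x ^+ 2 + b * x + 1) / (1 - x ^+ n).
  by rewrite /pgeom !exprS; ring.
by rewrite x_root mulr0 mul0r.
Qed.

Lemma pgeom_cyc_rec d : (1 < n)%N -> (d < n)%N ->
  b * pgeom d + pgeom ((d + n.-1) %% n) + pgeom (d.+1 %% n)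
    = (d == 0)%:R * (x + b) + (d == n.-1)%:R.
Proof.
move=> lt1n ltdn; have [->|d_gt0] := posnP d.
  have := pgeom_rec n.-1.
  have -> : n.-1.+2 = (1 + n)%N by lia.
  have -> : n.-1.+1 = (0 + n)%N by lia.
  have ltpn : (n.-1 < n)%N by lia.
  rewrite !pgeom_shift add0n (modn_small ltpn) (modn_small lt1n).
  have -> : (0 == n.-1)%N = false by lia.
  rewrite /= expr0 expr1 mul1r addr0 => rec.
  by rewrite -[RHS]addr0 -rec; ring.
have [-> {d_gt0 ltdn}|neq_dp] := eqVneq d n.-1.
  have := pgeom_rec n.-2.
  have -> : n.-2.+2 = (0 + n)%N by lia.
  have -> : n.-2.+1 = n.-1 by lia.
  have -> : (n.-1 + n.-1 = n.-2 + n)%N by lia.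
  have ltp2n : (n.-2 < n)%N by lia.
  rewrite pgeom_shift modnDr (modn_small ltp2n) prednK ?modnn /=; last by lia.
  rewrite expr0 mul0r add0r => rec.
  by rewrite -[RHS]addr0 -rec; ring.
have -> : (d + n.-1 = d.-1 + n)%N by lia.
have ltpdn : (d.-1 < n)%N by lia.
have ltSdn : (d.+1 < n)%N by lia.
rewrite modnDr (modn_small ltpdn) (modn_small ltSdn).
by rewrite mul0r addr0 -(pgeom_rec d.-1) prednK.
Qed.
End PeriodicGeometric.

Lemma expr_neq1 (R : numDomainType) (x : R) (n : nat) :
  `|x| != 1 -> (0 < n)%N -> x ^+ n != 1.
Proof.
move=> nx1 n_gt0; apply: contra nx1 => /eqP xn1.
by rewrite -(pexpr_eq1 n_gt0 (normr_ge0 x)) -normrX xn1 normr1.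
Qed.

Section SqrtFiveRoots.
Variable R : rcfType.
Let s : R := Num.sqrt 5.
Let r : R := (-3 + s) / 2.
Let w : R := (-3 - s) / 2.

Lemma sqrt5_bounds : s ^+ 2 = 5 /\ 2 < s < 3.
Proof.
have s2 : s ^+ 2 = 5 by rewrite sqr_sqrtr // ler0n.
have s_ge0 : 0 <= s by rewrite sqrtr_ge0.
by split => //; apply/andP; split; nra.
Qed.

Lemma sqrt5_neq0 : s != 0.
Proof. by have [_ /andP[s_gt2 _]] := sqrt5_bounds; rewrite gt_eqF //; lra. Qed.

Lemma root_of_sqrt5 (t : R) :
  (2 * t + 3) ^+ 2 = 5 -> t ^+ 2 + 3 * t + 1 = 0.
Proof.
move=> t5; apply: (mulfI (_ : (4 : R) != 0)); first by rewrite pnatr_eq0.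
have -> : 4 * (t ^+ 2 + 3 * t + 1) = (2 * t + 3) ^+ 2 - 5 by ring.
by rewrite t5 subrr mulr0.
Qed.

Lemma r_root : r ^+ 2 + 3 * r + 1 = 0.
Proof.
have [s2 _] := sqrt5_bounds; apply: root_of_sqrt5.
by rewrite -s2; congr (_ ^+ 2); rewrite /r; field.
Qed.

Lemma w_root : w ^+ 2 + 3 * w + 1 = 0.
Proof.
have [s2 _] := sqrt5_bounds; apply: root_of_sqrt5.
by rewrite -s2 -sqrrN; congr (_ ^+ 2); rewrite /w; field.
Qed.

Lemma rn_neq1 n : (0 < n)%N -> r ^+ n != 1.
Proof.
have [_ /andP[s_gt2 s_lt3]] := sqrt5_bounds; apply: expr_neq1.
have r_neg : r < 0 by rewrite /r; lra.
have : - r < 1 by rewrite /r; lra.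
by rewrite ltr0_norm // => /lt_eqF ->.
Qed.

Lemma wn_neq1 n : (0 < n)%N -> w ^+ n != 1.
Proof.
have [_ /andP[s_gt2 s_lt3]] := sqrt5_bounds; apply: expr_neq1.
have w_neg : w < 0 by rewrite /w; lra.
have : 1 < - w by rewrite /w; lra.
by rewrite ltr0_norm // => /gt_eqF ->.
Qed.

Lemma a_coef_pgeom n j : (0 < n)%N -> (j <= n)%N ->
  a_coef R n j = (pgeom r n j - pgeom w n j) / s.
Proof.
move=> n_gt0 le_jn.
have rn1 : 1 - r ^+ n != 0 by rewrite subr_eq0 eq_sym rn_neq1.
have wn1 : 1 - w ^+ n != 0 by rewrite subr_eq0 eq_sym wn_neq1.
have pow2_split (y : R) :
    2 ^+ n - (2 * y) ^+ n = 2 ^+ (n - j) * 2 ^+ j * (1 - y ^+ n).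
  by rewrite -exprD subnK // exprMn; ring.
rewrite /a_coef /= -/s /pgeom.
have -> : -3 + s = 2 * r by rewrite /r; field.
have -> : -3 - s = 2 * w by rewrite /w; field.
rewrite !pow2_split !(exprMn _ 2 r) !(exprMn _ 2 w); field.
by rewrite sqrt5_neq0 rn1 wn1 !expf_neq0 ?pnatr_eq0.
Qed.

Lemma a_coef_cyc_rec n d : (1 < n)%N -> (d < n)%N ->
  3 * a_coef R n d + a_coef R n ((d + n.-1) %% n) + a_coef R n (d.+1 %% n)
    = (d == 0)%:R.
Proof.
move=> lt1n ltdn; have n_gt0 : (0 < n)%N by lia.
have le_mod m : (m %% n <= n)%N by exact: ltnW (ltn_pmod _ n_gt0).
rewrite !a_coef_pgeom ?le_mod ?(ltnW ltdn) //.
have rec_r := pgeom_cyc_rec r_root (rn_neq1 n_gt0) lt1n ltdn.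
have rec_w := pgeom_cyc_rec w_root (wn_neq1 n_gt0) lt1n ltdn.
transitivity (((d == 0)%:R * (r + 3) + (d == n.-1)%:R
               - ((d == 0)%:R * (w + 3) + (d == n.-1)%:R)) / s).
  by rewrite -rec_r -rec_w; ring.
by have := sqrt5_neq0; rewrite /r /w => s_neq0; field.
Qed.
End SqrtFiveRoots.

Theorem mainTheorem3 (R : rcfType) (n : nat) (hn : (3 < n)%N) :
  circ n (c311 R n) \in unitmx /\
  invmx (circ n (c311 R n)) = circ n (a_coef R n).
Proof.
have n_gt2 : (2 < n)%N := ltnW hn.
have CA : circ n (c311 R n) *m circ n (a_coef R n) = 1%:M.
  rewrite mulmx_circ -circ_delta; apply: eq_circ => d ltdn.
  by rewrite conv_c311 ?a_coef_cyc_rec ?(ltnW n_gt2).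
have [C_unit _] := mulmx1_unit CA.
split => //.
by rewrite -[invmx _]mulmx1 -CA mulmxA mulVmx // mul1mx.
Qed.
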